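(* Let $\mathbf x_1,\ldots,\mathbf x_n\in\mathbb{R}^d\setminus\{\mathbf 0\}$, with $x_{ij}$ the $j$-th coordinate of $\mathbf x_i$, and suppose the probit likelihood $\ell(\beta)=\prod_{i=1}^n\Phi(\mathbf x_i^T\beta)$ has a unique global maximizer on $\mathbb{R}^d$. Let $\pi(\beta)\propto\ell(\beta)$ be the posterior under a flat prior. For $j=1,\ldots,d$ let $$z_j(\beta)=-\frac12\sum_{i=1}^n\frac{x_{ij}\,\phi(\mathbf x_i^T\beta)}{\Phi(\mathbf x_i^T\beta)}.$$ Then for every $\delta>0$ and every $j$, $\mathbb{E}_\pi[|z_j|^{2+\delta}]<\infty$.
   Context: $\Phi$ and $\phi$ denote the standard normal c.d.f. and density. The $z_j$ are the control variates $-\frac12\partial_{\beta_j}\ln\pi$ of the zero-variance method with linear trial polynomial. *)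

From HB Require Import structures.
From mathcomp Require Import all_boot all_order all_algebra.
From mathcomp Require Import all_classical all_reals all_analysis.
Set Implicit Arguments. Unset Strict Implicit. Unset Printing Implicit Defensive.
Import Order.TTheory GRing.Theory Num.Theory.
Local Open Scope classical_set_scope.
Local Open Scope ring_scope.

Definition std_phi (R : realType) (t : R) : R := normal_pdf 0 1 t.
Definition std_Phi (R : realType) (t : R) : R :=
  fine (\int[@lebesgue_measure R]_(u in `]-oo, t]) (std_phi u)%:E)%E.

(* Lebesgue integral over R^d (points = d.-tuples), written as the iterated
   integral over the coordinates; for nonnegative measurable integrands this
   equals the integral w.r.t. d-dimensional Lebesgue measure (Tonelli). *)
Fixpoint iint_Rd (R : realType) (d : nat) : (d.-tuple R -> \bar R) -> \bar R :=
  match d with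
  | 0 => fun f => f [tuple]
  | d'.+1 => fun f =>
      (\int[@lebesgue_measure R]_(x in [set: R])
          iint_Rd (fun t : d'.-tuple R => f [tuple of x :: t]))%E
  end.

Definition dotR (R : realType) (d : nat) (x b : d.-tuple R) : R :=
  \sum_(j < d) tnth x j * tnth b j.

Definition probit_lik (R : realType) (n d : nat) (X : 'I_n -> d.-tuple R)
  (b : d.-tuple R) : R := \prod_(i < n) std_Phi (dotR (X i) b).

Definition zcv (R : realType) (n d : nat) (X : 'I_n -> d.-tuple R) (j : 'I_d)
  (b : d.-tuple R) : R :=
  - (1/2) * \sum_(i < n) tnth (X i) j * std_phi (dotR (X i) b)
                         / std_Phi (dotR (X i) b).

(* If the probit likelihood has a unique maximizer, then every direction
   u <> 0 has some x_i^T u < 0 (otherwise moving the maximizer along u would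
   not decrease the likelihood); compactness of the unit sphere makes this
   uniform, x_i^T beta <= - c |beta|, and the Gaussian tail
   Phi(t) <= 2 e^{-3t^2/8} (t <= 0) yields l(beta) <= 2 e^{-a |beta|^2}.
   The Mills-type bound phi/Phi(t) <= e^{3/2} (1 + |t|) makes |z_j| at most
   affine in |beta|, hence |z_j|^p <= C e^{eta |beta|^2} for every eta > 0.
   So l and |z_j|^(2+delta) l are both dominated by Gaussians. *)
From HB Require Import structures.
From mathcomp Require Import all_boot all_order all_algebra.
From mathcomp Require Import all_classical all_reals all_analysis.
From mathcomp Require Import ring lra measurable_realfun.
Set Implicit Arguments. Unset Strict Implicit. Unset Printing Implicit Defensive.
Import Order.TTheory GRing.Theory Num.Theory.
Import numFieldNormedType.Exports.
Local Open Scope classical_set_scope.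
Local Open Scope ring_scope.
Local Notation leb := (@lebesgue_measure _).

Section StandardNormal.
Variable R : realType.
Implicit Types s t u : R.

Lemma normal_pdf0E s u : s != 0 ->
  normal_pdf 0 s u = normal_peak s * expR (- u ^+ 2 / (s ^+ 2 *+ 2)).
Proof. by move=> s0; rewrite /normal_pdf (negbTE s0) /normal_fun subr0. Qed.

Lemma std_phiE u : std_phi u = normal_peak 1 * expR (- u ^+ 2 / 2).
Proof. by rewrite /std_phi normal_pdf0E ?oner_eq0 // expr1n. Qed.

Lemma normal_peak1_gt0 : 0 < normal_peak (1 : R).
Proof. by rewrite normal_peak_gt0 ?oner_eq0. Qed.

Lemma std_phi_gt0 u : 0 < std_phi u.
Proof. by rewrite std_phiE mulr_gt0 ?expR_gt0 ?normal_peak1_gt0. Qed.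

Lemma measurable_std_phi (D : set R) : measurable_fun D (fun u => (std_phi u)%:E).
Proof.
apply: (measurable_funS _ (subsetT D)) => //.
by apply/measurable_EFinP; exact: measurable_normal_pdf.
Qed.

Let std_phi_ge0E u : (0 <= (std_phi u)%:E)%E.
Proof. by rewrite lee_fin ltW ?std_phi_gt0. Qed.

Lemma std_PhiE t : (std_Phi t)%:E = (\int[leb]_(u in `]-oo, t]) (std_phi u)%:E)%E.
Proof.
rewrite /std_Phi fineK // ge0_fin_numE ?integral_ge0 //.
apply: le_lt_trans (ltry 1); rewrite -(integral_normal_pdf 0 1).
by apply: ge0_subset_integral => //; exact: measurable_std_phi.
Qed.

Lemma std_Phi_ge0 t : 0 <= std_Phi t.
Proof. by rewrite -lee_fin std_PhiE integral_ge0. Qed.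

Lemma std_Phi_le1 t : std_Phi t <= 1.
Proof.
rewrite -lee_fin std_PhiE -(integral_normal_pdf 0 1).
by apply: ge0_subset_integral => //; exact: measurable_std_phi.
Qed.

Lemma std_Phi_nondecreasing : {homo @std_Phi R : s t / s <= t}.
Proof.
move=> s t st; rewrite -lee_fin !std_PhiE.
apply: ge0_subset_integral => //=; first exact: measurable_std_phi.
by move=> u /=; rewrite !in_itv /= => us; apply: le_trans st.
Qed.

(* with h = 1/(1 + |t|), every u in [t - h, t] has u^2 <= t^2 + 3, so
   phi(u) >= e^{-3/2} phi(t) there *)
Lemma std_Phi_ge_Mills t : expR (- (3/2)) * std_phi t / (1 + `|t|) <= std_Phi t.
Proof.
set h := (1 + `|t|)^-1; set m := expR (- (3/2)) * std_phi t.
have h0 : 0 < h by rewrite invr_gt0 ltr_pwDl.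
have th : `|t| * h <= 1.
  by rewrite ler_pdivrMr ?ltr_pwDl // mul1r lerDr.
have m0 : 0 <= m by rewrite mulr_ge0 ?expR_ge0 ?ltW ?std_phi_gt0.
rewrite -lee_fin std_PhiE.
apply: (@le_trans _ _ (\int[leb]_(u in `[(t - h)%R, t]) (std_phi u)%:E)%E); last first.
  apply: ge0_subset_integral => //; first exact: measurable_std_phi.
  by move=> u /=; rewrite !in_itv /= => /andP[].
apply: (@le_trans _ _ (\int[leb]_(u in `[(t - h)%R, t]) (cst m%:E u))%E).
  rewrite integral_cst //= lebesgue_measure_itv /= lte_fin ltrBlDr ltrDl h0.
  by rewrite -EFinD -EFinM opprB addrC subrK.
apply: ge0_le_integral => //; first exact: measurable_std_phi.
move=> u /=; rewrite in_itv /= => /andP[tu ut]; rewrite lee_fin /m !std_phiE.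
rewrite mulrCA ler_pM2l ?normal_peak1_gt0 // -expRD ler_expR.
have hle1 : h <= 1 by rewrite invf_le1 ?ltr_pwDl // lerDl.
suff : u ^+ 2 <= t ^+ 2 + 3 by lra.
have [u0|u0] := leP 0 u; first by nra.
have nu : - u <= `|t| + h by have := ler_norm (- t); rewrite normrN; lra.
have : (- u) ^+ 2 <= (`|t| + h) ^+ 2 by rewrite ler_sqr ?nnegrE; lra.
by rewrite sqrrN -[t ^+ 2]real_normK ?num_real //; nra.
Qed.

Lemma std_Phi_gt0 t : 0 < std_Phi t.
Proof.
apply: lt_le_trans (std_Phi_ge_Mills t).
by rewrite divr_gt0 ?mulr_gt0 ?expR_gt0 ?std_phi_gt0 // ltr_pwDl.
Qed.

Lemma std_phi_div_std_Phi_le t : std_phi t / std_Phi t <= expR (3/2) * (1 + `|t|).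
Proof.
have t1 : 0 < 1 + `|t| by rewrite ltr_pwDl.
rewrite ler_pdivrMr ?std_Phi_gt0 //.
apply: le_trans (ler_wpM2l _ (std_Phi_ge_Mills t)); last first.
  by rewrite mulr_ge0 ?expR_ge0 ?ltW.
have E : expR (3/2) * expR (- (3/2)) = 1 :> R by rewrite -expRD addrN expR0.
suff -> : expR (3/2) * (1 + `|t|) * (expR (- (3/2)) * std_phi t / (1 + `|t|)) =
  expR (3/2) * expR (- (3/2)) * std_phi t by rewrite E mul1r.
by field; rewrite gt_eqF.
Qed.

Lemma normal_peak2 : normal_peak (2 : R) = normal_peak 1 / 2.
Proof.
rewrite /normal_peak expr1n mul1r -mulrnAr sqrtrM ?sqr_ge0 //.
by rewrite sqrtr_sqr ger0_norm // invfM mulrC.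
Qed.

(* on ]-oo, t] with t <= 0, phi is at most 2 e^{-3t^2/8} times the N(0, 4)
   density, as e^{-u^2/2} = e^{-3u^2/8} e^{-u^2/8} and t^2 <= u^2 *)
Lemma std_Phi_tail t : t <= 0 -> std_Phi t <= 2 * expR (- (3/8) * t ^+ 2).
Proof.
move=> t0; set C := 2 * expR (- (3/8) * t ^+ 2).
have C0 : 0 <= C by rewrite mulr_ge0 ?expR_ge0.
have mf : measurable_fun setT (fun u => (C * normal_pdf 0 2 u)%:E).
  by apply/measurable_EFinP; apply: measurable_funM => //; exact: measurable_normal_pdf.
have f0 u : (0 <= (C * normal_pdf 0 2 u)%:E)%E.
  by rewrite lee_fin mulr_ge0 ?normal_pdf_ge0.
rewrite -lee_fin std_PhiE.
apply: (@le_trans _ _ (\int[leb]_(u in `]-oo, t]) (C * normal_pdf 0 2 u)%:E)%E).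
  apply: ge0_le_integral => //; first exact: measurable_std_phi.
    exact: measurable_funS mf.
  move=> u /=; rewrite in_itv /= => ut.
  rewrite lee_fin std_phiE normal_pdf0E ?pnatr_eq0 // normal_peak2 /C.
  rewrite mulrCA !mulrA divfK ?pnatr_eq0 // -mulrA ler_pM2l ?normal_peak1_gt0 //.
  rewrite -expRD ler_expR.
  have : t ^+ 2 <= u ^+ 2 by nra.
  rewrite (_ : (2 : R) ^+ 2 *+ 2 = 8); last by rewrite -mulr_natr; ring.
  lra.
apply: (@le_trans _ _ (\int[leb]_(u in setT) (C * normal_pdf 0 2 u)%:E)%E).
  exact: ge0_subset_integral.
under eq_integral do rewrite EFinM.
rewrite ge0_integralZl //.
- by rewrite integral_normal_pdf mule1.
- by apply/measurable_EFinP; exact: measurable_normal_pdf.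
- by move=> u _; rewrite lee_fin normal_pdf_ge0.
Qed.
End StandardNormal.

Section IteratedIntegral.
Variable R : realType.

Lemma ge0_le_integralT_nomeas (f g : R -> \bar R) :
  (forall x, 0 <= f x)%E -> (forall x, f x <= g x)%E ->
  (\int[leb]_x f x <= \int[leb]_x g x)%E.
Proof.
move=> f0 fg; have g0 x : (0 <= g x)%E := le_trans (f0 x) (fg x).
rewrite !ge0_integralTE //; apply: le_ereal_sup => _ [h hf <-].
by exists h => //= x; exact: le_trans (hf x) (fg x).
Qed.

Lemma iint_Rd_ge0 d (f : d.-tuple R -> \bar R) :
  (forall b, 0 <= f b)%E -> (0 <= iint_Rd f)%E.
Proof.
elim: d f => [|d IH] f f0 /=; first exact: f0.
by apply: integral_ge0 => x _; exact: IH.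
Qed.

Lemma le_iint_Rd d (f g : d.-tuple R -> \bar R) :
  (forall b, 0 <= f b)%E -> (forall b, f b <= g b)%E -> (iint_Rd f <= iint_Rd g)%E.
Proof.
elim: d f g => [|d IH] f g f0 fg /=; first exact: fg.
by apply: ge0_le_integralT_nomeas => x; [exact: iint_Rd_ge0 | exact: IH].
Qed.

Lemma iint_Rd_normal_pdf_prod d (s K : R) : s != 0 -> 0 <= K ->
  iint_Rd (fun b : d.-tuple R => (K * \prod_(k < d) normal_pdf 0 s (tnth b k))%:E) = K%:E.
Proof.
move=> s0; elim: d K => [|d IH] K K0 /=; first by rewrite big_ord0 mulr1.
transitivity (\int[leb]_(x in [set: R]) (K * normal_pdf 0 s x)%:E)%E.
  apply: eq_integral => x _; rewrite -IH ?mulr_ge0 ?normal_pdf_ge0 //.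
  congr iint_Rd; apply: funext => t; rewrite big_ord_recl tnth0 mulrA.
  by congr (_ * _)%:E; apply: eq_bigr => k _; rewrite tnthS.
under eq_integral do rewrite EFinM.
rewrite ge0_integralZl //.
- by rewrite integral_normal_pdf mule1.
- by apply/measurable_EFinP; exact: measurable_normal_pdf.
- by move=> u _; rewrite lee_fin normal_pdf_ge0.
Qed.

Definition tuple_row d (b : d.-tuple R) : 'rV[R]_d := \row_j tnth b j.

Lemma norm_tnth_le_tuple_row d (b : d.-tuple R) k : `|tnth b k| <= `|tuple_row b|.
Proof.
rewrite [X in _ <= X]mx_normrE.
by apply: le_trans (le_bigmax _ _ (ord0, k)); rewrite /= mxE.
Qed.

Lemma expR_le_normal_pdf_prod d (b : d.-tuple R) (a s : R) :
  (0 < d)%N -> 0 < a -> 0 < s -> s ^+ 2 *+ 2 = d%:R / a ->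
  expR (- a * `|tuple_row b| ^+ 2) <=
    normal_peak s ^- d * \prod_(k < d) normal_pdf 0 s (tnth b k).
Proof.
move=> d0 a0 s0 s2; set r := `|tuple_row b|.
have dR : 0 < d%:R :> R by rewrite ltr0n.
under eq_bigr do rewrite normal_pdf0E ?gt_eqF //.
rewrite big_split /= prodr_const card_ord mulKf; last first.
  by rewrite expf_eq0 gt_eqF ?andbF // normal_peak_gt0 // gt_eqF.
rewrite -expR_sum ler_expR s2.
have -> : \sum_(k < d) - tnth b k ^+ 2 / (d%:R / a) =
    - (a / d%:R) * \sum_(k < d) tnth b k ^+ 2.
  by rewrite mulr_sumr; apply: eq_bigr => k _; field; rewrite !gt_eqF.
have sq_le : \sum_(k < d) tnth b k ^+ 2 <= d%:R * r ^+ 2.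
  rewrite (_ : d%:R * r ^+ 2 = \sum_(k < d) r ^+ 2); last first.
    by rewrite sumr_const card_ord mulr_natl.
  apply: ler_sum => k _.
  rewrite -real_normK ?num_real // ler_pXn2r ?nnegrE ?normr_ge0 //.
  exact: norm_tnth_le_tuple_row.
have := ler_wpM2l (divr_ge0 (ltW a0) (ltW dR)) sq_le.
have -> : a / d%:R * (d%:R * r ^+ 2) = a * r ^+ 2 by field; rewrite gt_eqF.
lra.
Qed.

Lemma iint_Rd_lt_pinfty_gauss_dominated d (f : d.-tuple R -> R) (a K : R) :
  0 < a -> (forall b, 0 <= f b) ->
  (forall b, f b <= K * expR (- a * `|tuple_row b| ^+ 2)) ->
  (iint_Rd (fun b => (f b)%:E) < +oo)%E.
Proof.
move=> a0 f0 fK; case: d f f0 fK => [|d] f f0 fK; first exact: ltry.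
have K0 : 0 <= K by have := le_trans (f0 [tuple of nseq _ 0]) (fK _); rewrite pmulr_lge0 ?expR_gt0.
pose s := Num.sqrt (d.+1%:R / (2 * a)).
have s0 : 0 < s by rewrite sqrtr_gt0 divr_gt0 ?mulr_gt0.
have s2 : s ^+ 2 *+ 2 = d.+1%:R / a.
  by rewrite sqr_sqrtr ?divr_ge0 ?mulr_ge0 ?ltW //; field; rewrite gt_eqF.
have pk0 : 0 <= K * normal_peak s ^- d.+1.
  by rewrite mulr_ge0 // invr_ge0 exprn_ge0 // normal_peak_ge0.
apply: le_lt_trans (le_iint_Rd (g := fun b => ((K * normal_peak s ^- d.+1) *
    \prod_(k < d.+1) normal_pdf 0 s (tnth b k))%:E) _ _) _.
- by move=> b; rewrite lee_fin.
- move=> b; rewrite lee_fin -mulrA; apply: le_trans (fK b) _.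
  by rewrite ler_wpM2l // expR_le_normal_pdf_prod.
- by rewrite iint_Rd_normal_pdf_prod ?gt_eqF // ltry.
Qed.
End IteratedIntegral.

Lemma continuous_bigmax (R : realType) (T : topologicalType) (I : Type) (s : seq I)
    (x0 : R) (F : I -> T -> R) :
  (forall i, continuous (F i)) ->
  continuous (fun x => \big[Num.max/x0]_(i <- s) F i x).
Proof.
move=> Fc; elim: s => [|i s IH].
  by under eq_fun do rewrite big_nil; exact: cst_continuous.
under eq_fun do rewrite big_cons.
by move=> x; apply: continuous_max; [exact: Fc | exact: IH].
Qed.

Lemma continuous_sum (R : realType) (T : topologicalType) (I : Type) (s : seq I)
    (F : I -> T -> R) :
  (forall i, continuous (F i)) -> continuous (fun x => \sum_(i <- s) F i x).
Proof.
move=> Fc; elim: s => [|i s IH].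
  by under eq_fun do rewrite big_nil; exact: cst_continuous.
under eq_fun do rewrite big_cons.
by move=> x; apply: continuousD; [exact: Fc | exact: IH].
Qed.

Section UniformNegativeDirection.
Variables (R : realType) (n d : nat) (L : 'I_n -> 'rV[R]_d -> R).
Hypothesis L_cont : forall i, continuous (L i).
Hypothesis L_homo : forall i k u, 0 <= k -> L i (k *: u) = k * L i u.

Lemma uniform_negative_direction : (0 < d)%N ->
  (forall u, u != 0 -> exists i, L i u < 0) ->
  exists2 c : R, 0 < c & forall u, exists i, L i u <= - c * `|u|.
Proof.
move=> d0 Lneg.
pose S := [set u : 'rV[R]_d | `|u| = 1].
pose h u := \big[Num.max/0]_(i < n) - L i u.
have h_cont : continuous h.
  by apply: continuous_bigmax => i u; apply: continuousN; exact: L_cont.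
have S0 : S !=set0.
  pose v : 'rV[R]_d := const_mx 1.
  have v0 : v != 0.
    apply/eqP => /matrixP /(_ ord0 (Ordinal d0)); rewrite !mxE => /eqP.
    by rewrite oner_eq0.
  exists (`|v|^-1 *: v); rewrite /S /= normrZ normfV normr_id mulVf //.
  by rewrite normr_eq0.
have Sc : compact S.
  apply: bounded_closed_compact.
    by exists 1; split => // M M1 x; rewrite /S /= => ->; exact: ltW.
  rewrite (_ : S = (fun u : 'rV[R]_d => `|u|) @^-1` [set 1]) //.
  apply: preimage_closed; last exact: closed_eq.
  by move=> u _; exact: norm_continuous.
have [v0 v0S v0min] := EVT_min_rV S0 Sc (continuous_subspaceT h_cont).
have v0_neq0 : v0 != 0.
  apply/eqP => v00; move: v0S; rewrite inE /S /= v00 normr0 => /eqP.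
  by rewrite eq_sym oner_eq0.
have [i0 Li0] := Lneg v0 v0_neq0.
have h0 : 0 < h v0 by apply: lt_le_trans (le_bigmax _ _ i0); rewrite oppr_gt0.
exists (h v0) => // u; have [->|u0] := eqVneq u 0.
  exists i0; have := L_homo i0 0 (lexx (0 : R)).
  by rewrite scale0r mul0r normr0 mulr0 => ->.
have nu0 : 0 < `|u| by rewrite normr_gt0.
pose v := `|u|^-1 *: u.
have vS : v \in S by rewrite inE /S /= /v normrZ normfV normr_id mulVf ?gt_eqF.
have /bigmax_geP[|[i _ Hi]] := v0min v vS; first by rewrite leNgt h0.
exists i; have -> : L i u = `|u| * L i v.
  by rewrite /v L_homo ?invr_ge0 ?normr_ge0 // mulrA mulfV ?gt_eqF ?mul1r.
nra.
Qed.
End UniformNegativeDirection.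

Lemma powR_le_expR_sqr (R : realType) (x A s p eta : R) :
  0 <= x -> 0 <= A -> 0 <= s -> 0 <= p -> 0 < eta -> x <= A * (1 + s) ->
  x `^ p <= A `^ p * expR (p ^+ 2 / (4 * eta)) * expR (eta * s ^+ 2).
Proof.
move=> x0 A0 s0 p0 eta0 xA.
apply: (@le_trans _ _ ((A * (1 + s)) `^ p)).
  by apply: ge0_ler_powR => //; rewrite nnegrE // mulr_ge0 // addr_ge0.
rewrite powRM ?addr_ge0 // -mulrA ler_wpM2l ?powR_ge0 // -expRD.
rewrite /powR gt_eqF ?ltr_pwDl // ler_expR.
apply: (@le_trans _ _ (p * s)).
  by rewrite ler_wpM2l //; apply: le_ln1Dx; lra.
(* p s <= p^2 / (4 eta) + eta s^2 is AM-GM: eta (s - p / (2 eta))^2 >= 0 *)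
have := mulr_ge0 (ltW eta0) (sqr_ge0 (s - p / (2 * eta))).
have -> : eta * (s - p / (2 * eta)) ^+ 2 = eta * s ^+ 2 - p * s + p ^+ 2 / (4 * eta).
  by field; rewrite gt_eqF.
lra.
Qed.

Section Probit.
Variables (R : realType) (n d : nat) (X : 'I_n -> d.-tuple R).

Definition row_dot (x : d.-tuple R) (u : 'rV[R]_d) : R := \sum_(j < d) tnth x j * u ord0 j.

Lemma continuous_row_dot x : continuous (row_dot x).
Proof.
suff : continuous (fun u : 'rV[R]_d => \sum_(j < d) tnth x j * u ord0 j) by [].
apply: continuous_sum => j u.
apply: (@continuousM _ _ (fun=> tnth x j) (fun v : 'rV[R]_d => v ord0 j)).
  exact: cst_continuous.
exact: coord_continuous.
Qed.

Lemma row_dotZ x k u : row_dot x (k *: u) = k * row_dot x u.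
Proof. by rewrite /row_dot mulr_sumr; apply: eq_bigr => j _; rewrite mxE mulrCA. Qed.

Lemma row_dot_tuple_row x b : row_dot x (tuple_row b) = dotR x b.
Proof. by apply: eq_bigr => j _; rewrite mxE. Qed.

Lemma probit_lik_ge0 b : 0 <= probit_lik X b.
Proof. by apply: prodr_ge0 => i _; exact: std_Phi_ge0. Qed.

Lemma probit_lik_le_std_Phi i b : probit_lik X b <= std_Phi (dotR (X i) b).
Proof.
rewrite /probit_lik (bigD1 i) //= ler_piMr ?std_Phi_ge0 //.
by apply: prodr_ile1 => k _; rewrite std_Phi_ge0 std_Phi_le1.
Qed.

Lemma le_probit_lik b b' :
  (forall i, dotR (X i) b <= dotR (X i) b') -> probit_lik X b <= probit_lik X b'.
Proof.
move=> bb'; apply: ler_prod => i _.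
by rewrite std_Phi_ge0 std_Phi_nondecreasing.
Qed.

Lemma unique_argmax_row_dot_neg :
  (exists! b, forall b', probit_lik X b' <= probit_lik X b) ->
  forall u : 'rV[R]_d, u != 0 -> exists i, row_dot (X i) u < 0.
Proof.
move=> [b [bmax bunique]] u u0; apply: contrapT => /forallNP Lu.
pose b' := [tuple tnth b j + u ord0 j | j < d].
have b'E i : dotR (X i) b' = dotR (X i) b + row_dot (X i) u.
  by rewrite /dotR /row_dot -big_split; apply: eq_bigr => j _; rewrite tnth_mktuple mulrDr.
have b'b : b' = b.
  apply/esym/bunique => b''; apply: le_trans (bmax b'') _.
  by apply: le_probit_lik => i; rewrite b'E lerDl leNgt; apply/negP; exact: Lu.
move/eqP: u0; apply; apply/rowP => j; rewrite mxE.
have /eqP := congr1 (fun t => tnth t j) b'b; rewrite tnth_mktuple.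
by rewrite -subr_eq0 addrC addKr => /eqP.
Qed.

Lemma probit_lik_le_gauss : (0 < d)%N ->
  (exists! b, forall b', probit_lik X b' <= probit_lik X b) ->
  exists2 a : R, 0 < a & forall b, probit_lik X b <= 2 * expR (- a * `|tuple_row b| ^+ 2).
Proof.
move=> d0 /unique_argmax_row_dot_neg Lneg.
have [c c0 Lc] := @uniform_negative_direction R n d (fun i => row_dot (X i))
  (fun i => continuous_row_dot (x := X i)) (fun i k u _ => row_dotZ (X i) k u) d0 Lneg.
exists (3/8 * c ^+ 2); first by rewrite mulr_gt0 ?exprn_gt0.
move=> b; have [i] := Lc (tuple_row b); rewrite row_dot_tuple_row.
set t := dotR (X i) b; set r := `|tuple_row b| => tr.
have r0 : 0 <= r by exact: normr_ge0.
have t0 : t <= 0 by nra.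
apply: le_trans (probit_lik_le_std_Phi i b) (le_trans (std_Phi_tail t0) _).
rewrite ler_pM2l // ler_expR.
have cr0 : 0 <= c * r by rewrite mulr_ge0 // ltW.
have : c ^+ 2 * r ^+ 2 <= t ^+ 2.
  by rewrite -exprMn -[t ^+ 2]sqrrN ler_sqr ?nnegrE; lra.
lra.
Qed.

Lemma zcv_affine_bound j : exists2 A : R, 0 <= A &
  forall b, `|zcv X j b| <= A * (1 + `|tuple_row b|).
Proof.
pose A := expR (3/2) * \sum_(i < n) `|tnth (X i) j| * (1 + \sum_(k < d) `|tnth (X i) k|).
exists A.
  by rewrite mulr_ge0 ?expR_ge0 // sumr_ge0 // => i _; rewrite mulr_ge0 ?addr_ge0 ?sumr_ge0.
move=> b; set r := `|tuple_row b|; have r0 : 0 <= r by exact: normr_ge0.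
have half : `|- (1/2)| = 1/2 :> R by rewrite normrN ger0_norm.
rewrite /zcv normrM half; apply: le_trans (ler_piMl _ _) _; [exact: normr_ge0 | lra |].
apply: le_trans (ler_norm_sum _ _ _) _.
rewrite /A -mulrA mulr_suml mulr_sumr; apply: ler_sum => i _.
set t := dotR (X i) b; set a := \sum_(k < d) `|tnth (X i) k|.
have a0 : 0 <= a by rewrite sumr_ge0.
have ta : `|t| <= a * r.
  rewrite /t /dotR /a mulr_suml; apply: le_trans (ler_norm_sum _ _ _) _.
  by apply: ler_sum => k _; rewrite normrM ler_wpM2l ?norm_tnth_le_tuple_row.
have ratio0 : 0 <= std_phi t / std_Phi t by rewrite divr_ge0 ?ltW ?std_phi_gt0 ?std_Phi_gt0.
rewrite -mulrA normrM (ger0_norm ratio0).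
rewrite [X in _ <= X](_ : _ = `|tnth (X i) j| * (expR (3/2) * ((1 + a) * (1 + r)))).
  rewrite ler_wpM2l //; apply: le_trans (std_phi_div_std_Phi_le t) _.
  rewrite ler_wpM2l ?expR_ge0 //; nra.
by ring.
Qed.
End Probit.

Theorem mainTheorem6 (R : realType) (n d : nat) (X : 'I_n -> d.-tuple R) :
  (forall i : 'I_n, exists j : 'I_d, tnth (X i) j != 0) ->
  (exists! b : d.-tuple R, forall b' : d.-tuple R, probit_lik X b' <= probit_lik X b) ->
  (iint_Rd (fun b => (probit_lik X b)%:E) < +oo)%E /\
  (forall (delta : R), 0 < delta -> forall j : 'I_d,
     (iint_Rd (fun b => (`|zcv X j b| `^ (2 + delta) * probit_lik X b)%:E) < +oo)%E).
Proof.
move=> _ lik_unique; case: d X lik_unique => [|d] X lik_unique.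
  by split=> [|? ? []]; rewrite ?ltry.
have [a a0 lik_le] := probit_lik_le_gauss (ltn0Sn d) lik_unique.
split; first exact: iint_Rd_lt_pinfty_gauss_dominated a0 (probit_lik_ge0 X) lik_le.
move=> delta delta0 j; set p := 2 + delta.
have p0 : 0 <= p by rewrite /p; lra.
have a20 : 0 < a / 2 by rewrite divr_gt0.
have [A A0 zA] := zcv_affine_bound X j.
set K := A `^ p * expR (p ^+ 2 / (4 * (a / 2))).
apply: (@iint_Rd_lt_pinfty_gauss_dominated _ _ _ (a / 2) (K * 2)) => // [b|b].
  by rewrite mulr_ge0 ?powR_ge0 ?probit_lik_ge0.
have zp := powR_le_expR_sqr (normr_ge0 _) A0 (normr_ge0 _) p0 a20 (zA b).
apply: le_trans (ler_pM (powR_ge0 _ _) (probit_lik_ge0 X b) zp (lik_le b)) _.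
rewrite /K -!mulrA ler_wpM2l ?powR_ge0 //.
rewrite ler_wpM2l ?expR_ge0 // mulrCA -expRD ler_pM2l // ler_expR.
lra.
Qed.
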